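(* Let $n$ be a positive odd integer. Then, modulo $\Phi_n(q)$, \[ \sum_{k=0}^{n-1}\frac{(q;q^4)_k^2}{(q^4;q^4)_k^2}(-q)^{3k} \equiv\begin{cases} \dfrac{(q^5,q^7;q^8)_{(n-1)/8}}{(q^4;q^4)_{(n-1)/4}} &\text{if } n\equiv 1\pmod 8,\\[6pt] \dfrac{(q^5,q^7;q^8)_{(3n-1)/8}}{(q^4;q^4)_{(3n-1)/4}} &\text{if } n\equiv 3\pmod 8,\\[6pt] 0 &\text{if } n\equiv 5,7\pmod 8. \end{cases} \]
   Context: For an indeterminate $a$ and a nonnegative integer $k$, $(a;q)_k=\prod_{j=0}^{k-1}(1-aq^j)$, with $(a;q)_0=1$, and $(a_1,\dots,a_m;q)_k=(a_1;q)_k\cdots(a_m;q)_k$. $\Phi_n(q)=\prod_{1\le j\le n,\ \gcd(j,n)=1}(q-e^{2\pi i j/n})$ is the $n$-th cyclotomic polynomial. A congruence between rational functions in $q$ modulo a polynomial $P(q)$ means that the difference, written as a ratio of polynomials with denominator coprime to $P(q)$, has numerator divisible by $P(q)$. *)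

From HB Require Import structures.
From mathcomp Require Import all_boot all_order all_algebra.
From mathcomp Require Import fraction cyclotomic.
Set Implicit Arguments. Unset Strict Implicit. Unset Printing Implicit Defensive.
Import Order.TTheory GRing.Theory Num.Theory.
Local Open Scope ring_scope.

Notation ratfun := {fraction {poly rat}}.
Notation tofracP := (@FracField.tofrac {poly rat}).
Notation "x %:F" := (tofracP x).

Definition qF : ratfun := ('X)%:F.

Definition qpoch (R : comPzRingType) (a p : R) (k : nat) : R :=
  \prod_(j < k) (1 - a * p ^+ j).

Definition PhiQ (n : nat) : {poly rat} := map_poly (intr : int -> rat) 'Phi_n.

Definition cong_mod (P : {poly rat}) (x y : ratfun) : Prop :=
  exists (N D : {poly rat}), [/\ coprimep D P, P %| N & x - y = N%:F / D%:F].

From HB Require Import structures.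
From mathcomp Require Import all_boot all_order all_algebra all_field.
From mathcomp Require Import fraction cyclotomic.
From mathcomp Require Import zify ring.
Set Implicit Arguments.
Unset Strict Implicit.
Unset Printing Implicit Defensive.

Import Order.TTheory GRing.Theory Num.Theory.
Local Open Scope ring_scope.

(* At a primitive n-th root of unity z pick m < n with z^(4m+1) = 1.  By the
   finite q-binomial theorem, (z;z^4)_k / (z^4;z^4)_k is the k-th coefficient a_k
   of A(X) = prod_(j<m) (1 - z^(4j+1) X), so the sum is sum_k a_k^2 (-z^3)^k, the
   coefficient of X^m in A(X) times the reversal of A(-z^3 X).  That reversal is a
   constant times A(-X), and A(X) A(-X) = B(X^2) with B(X) = prod_(j<m) (1 - z^(8j+2) X).
   Hence the sum vanishes for odd m, while for m = 2l it is a constant times the l-th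
   coefficient of B, again a q-binomial quotient (z^2;z^8)_l / (z^8;z^8)_l; reflecting
   the q-Pochhammer symbols through z^(8l+1) = 1 gives the right-hand side.  Since
   Phi_n is the minimal polynomial of z over Q, a rational function whose denominator
   does not vanish at z is divisible by Phi_n exactly when it vanishes at z. *)

Lemma big_ord_double (T : Type) (idx : T) (op : Monoid.law idx) (f : nat -> T) l :
  \big[op/idx]_(j < 2 * l) f j = \big[op/idx]_(i < l) op (f (2 * i)%N) (f (2 * i).+1).
Proof.
elim: l => [|l IH]; first by rewrite muln0 !big_ord0.
by rewrite mulnS !big_ord_recr /= IH Monoid.mulmA.
Qed.

Section LinearFactorProducts.
Variable R : comNzRingType.
Implicit Types (a b : nat -> R) (p : {poly R}).

Definition prod_1subX a M : {poly R} := \prod_(j < M) (1 - a j *: 'X).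
Definition prod_XsubC a M : {poly R} := \prod_(j < M) ('X - (a j)%:P).

Lemma coef_mul_1subX p c k :
  (p * (1 - c *: 'X))`_k = p`_k - (if k is k'.+1 then c * p`_k' else 0).
Proof.
rewrite mulrBr mulr1 coefB -scalerAr coefZ coefMX.
by case: k => [|k] //=; rewrite mulr0.
Qed.

Lemma coef_mul_XsubC p c k :
  (p * ('X - c%:P))`_k = (if k is k'.+1 then p`_k' else 0) - c * p`_k.
Proof. by rewrite mulrBr coefB coefMX coefMC mulrC; case: k. Qed.

Lemma eq_prod_1subX a b M : a =1 b -> prod_1subX a M = prod_1subX b M.
Proof. by move=> eq_ab; apply: eq_bigr => j _; rewrite eq_ab. Qed.

Lemma prod_1subXS a M : prod_1subX a M.+1 = prod_1subX a M * (1 - a M *: 'X).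
Proof. by rewrite /prod_1subX big_ord_recr. Qed.

Lemma prod_XsubCS a M : prod_XsubC a M.+1 = prod_XsubC a M * ('X - (a M)%:P).
Proof. by rewrite /prod_XsubC big_ord_recr. Qed.

Lemma coef0_prod_1subX a M : (prod_1subX a M)`_0 = 1.
Proof.
elim: M => [|M IH]; first by rewrite /prod_1subX big_ord0 coefC.
by rewrite prod_1subXS coef_mul_1subX IH subr0.
Qed.

Lemma coef_prod_1subX_gt a M k : (M < k)%N -> (prod_1subX a M)`_k = 0.
Proof.
elim: M k => [|M IH] [|k] //= ltMk; first by rewrite /prod_1subX big_ord0 coefC.
by rewrite prod_1subXS coef_mul_1subX !IH ?mulr0 ?subr0 // ltnW.
Qed.

Lemma coef_prod_XsubC_gt a M k : (M < k)%N -> (prod_XsubC a M)`_k = 0.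
Proof.
elim: M k => [|M IH] [|k] //= ltMk; first by rewrite /prod_XsubC big_ord0 coefC.
by rewrite prod_XsubCS coef_mul_XsubC !IH ?mulr0 ?subr0 // ltnW.
Qed.

Lemma coef_prod_1subX_scale c a M k :
  (prod_1subX (fun j => c * a j) M)`_k = c ^+ k * (prod_1subX a M)`_k.
Proof.
elim: M k => [|M IH] k.
  by rewrite /prod_1subX !big_ord0 coefC; case: k => [|k]; rewrite ?mulr1 ?mulr0.
rewrite !prod_1subXS !coef_mul_1subX IH; case: k => [|k]; first by rewrite !subr0.
by rewrite IH exprS; ring.
Qed.

Lemma coef_prod_XsubC_recip a M i :
  (i <= M)%N -> (prod_XsubC a M)`_i = (prod_1subX a M)`_(M - i).
Proof.
elim: M i => [|M IH] i leiM.
  by move: leiM; rewrite leqn0 => /eqP ->; rewrite /prod_XsubC /prod_1subX !big_ord0.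
rewrite prod_XsubCS prod_1subXS coef_mul_XsubC coef_mul_1subX.
case: i leiM => [|i] leiM.
  by rewrite subn0 [_`_M.+1]coef_prod_1subX_gt // IH // subn0 sub0r.
have [ltiM | eqiM] : (i < M)%N \/ i = M by lia.
  rewrite subSS (IH i) 1?ltnW // (IH i.+1) //.
  by have -> : (M - i = (M - i.+1).+1)%N by lia.
by rewrite eqiM subnn [_`_M.+1]coef_prod_XsubC_gt // mulr0 subr0 IH // subnn subr0.
Qed.

(* The finite q-binomial theorem, in the case v = y^-M. *)
Lemma coef_prod_1subX_geom v y M k : v * y ^+ M = 1 ->
  (prod_1subX (fun j => v * y ^+ j) M)`_k * qpoch y y k = qpoch v y k.
Proof.
move=> vyM1; set c := fun i => (prod_1subX (fun j => v * y ^+ j) M)`_i.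
have shift : prod_1subX (fun j => y * (v * y ^+ j)) M * (1 - v *: 'X) =
             prod_1subX (fun j => v * y ^+ j) M * (1 - 1 *: 'X).
  rewrite -[in 1 *: 'X]vyM1 -prod_1subXS /prod_1subX big_ord_recl mulrC expr0 mulr1.
  by congr (_ * _); apply: eq_bigr => j _; rewrite /= exprS mulrCA.
have recc i : c i.+1 * (1 - y ^+ i.+1) = c i * (1 - v * y ^+ i).
  move: (congr1 (fun p => p`_i.+1) shift) => /=.
  rewrite !coef_mul_1subX !(coef_prod_1subX_scale y (fun j => v * y ^+ j)) mul1r.
  rewrite -/(c i) -/(c i.+1) => eq_coef; apply/eqP; rewrite -subr_eq0; apply/eqP.
  transitivity (c i.+1 - c i - (y ^+ i.+1 * c i.+1 - v * (y ^+ i * c i))); first ring.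
  by rewrite eq_coef subrr.
elim: k => [|k IH]; first by rewrite /qpoch !big_ord0 mulr1 coef0_prod_1subX.
rewrite /qpoch !big_ord_recr /= -/(qpoch y y k) -/(qpoch v y k) -IH -/(c k.+1) -/(c k).
by rewrite mulrCA -exprS recc; ring.
Qed.

Lemma prod_1subX_mulN a M :
  prod_1subX a M * prod_1subX (fun j => - a j) M =
  prod_1subX (fun j => a j ^+ 2) M \Po 'X^2.
Proof.
elim: M => [|M IH]; first by rewrite /prod_1subX !big_ord0 mulr1 comp_polyC.
rewrite !prod_1subXS comp_polyM -IH comp_polyB comp_polyZ comp_polyX comp_polyC.
rewrite -!mul_polyC polyCN rmorphXn; ring.
Qed.

Lemma prod_XsubC_reflect b c M :
  (forall j, (j < M)%N -> b j * c (M - j.+1)%N = 1) ->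
  prod_XsubC b M = (\prod_(j < M) - b j)%:P * prod_1subX c M.
Proof.
move=> bc1; rewrite /prod_1subX [X in _ = _ * X](reindex_inj rev_ord_inj) /=.
rewrite rmorph_prod -big_split; apply: eq_bigr => j _ /=.
by rewrite -mul_polyC mulrBr mulr1 mulrA -polyCM mulNr bc1 // !polyCN polyC1 mulN1r opprK addrC.
Qed.

Lemma qpoch_reflect (x y p : R) l :
  (forall j, (j < l)%N -> (x * p ^+ j) * (y * p ^+ (l - j.+1)) = 1) ->
  qpoch x p l = \prod_(j < l) (- (x * p ^+ j)) * qpoch y p l.
Proof.
move=> xy1; rewrite /qpoch [X in _ = _ * X](reindex_inj rev_ord_inj) /= -big_split.
by apply: eq_bigr => j _ /=; rewrite mulrBr mulr1 mulNr xy1 // opprK addrC.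
Qed.

Lemma qpoch_double (x p : R) l :
  qpoch x p (2 * l)%N = qpoch x (p ^+ 2) l * qpoch (x * p) (p ^+ 2) l.
Proof.
rewrite /qpoch (big_ord_double _ (fun j => 1 - x * p ^+ j)) -big_split.
by apply: eq_bigr => i _ /=; rewrite -exprM exprS; ring.
Qed.

End LinearFactorProducts.

Definition sum_qpoch_sq (F : fieldType) (q : F) (n : nat) : F :=
  \sum_(k < n) (qpoch q (q ^+ 4) k) ^+ 2 / (qpoch (q ^+ 4) (q ^+ 4) k) ^+ 2
               * (- q) ^+ (3 * k)%N.

Definition closed_form (F : fieldType) (q : F) (m : nat) : F :=
  if (2 %| m)%N then
    qpoch (q ^+ 5) (q ^+ 8) (m %/ 2) * qpoch (q ^+ 7) (q ^+ 8) (m %/ 2)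
      / qpoch (q ^+ 4) (q ^+ 4) m
  else 0.

Lemma qpoch_prim_root_neq0 (R : idomainType) (z : R) n c k :
  n.-primitive_root z -> coprime c n -> (k < n)%N -> qpoch (z ^+ c) (z ^+ c) k != 0.
Proof.
move=> z_prim co_cn lt_kn; apply/prodf_neq0 => j _.
rewrite -exprM -exprD -mulnS subr_eq0 eq_sym -(prim_order_dvd z_prim).
rewrite Gauss_dvdr 1?coprime_sym //.
by apply/negP => /(dvdn_leq (ltn0Sn _)); have := ltn_ord j; lia.
Qed.

Lemma coprime_pow2_odd k n : odd n -> coprime (2 ^ k) n.
Proof. by move=> n_odd; rewrite coprime_sym coprimeXr // coprime_sym coprime2n. Qed.

Lemma reflection_constants_cancel (R : comNzRingType) (x : R) l :
  x ^+ (8 * l).+1 = 1 ->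
  \prod_(j < 2 * l) (x ^+ 4) ^+ j.+1 * \prod_(j < l) - (x ^+ 2 * (x ^+ 8) ^+ j)
    * \prod_(j < l) - (x ^+ 4 * (x ^+ 8) ^+ j) = 1.
Proof.
move=> x8l1.
have prod_pow k : \prod_(i < k) x ^+ (32 * i + 18) = x ^+ ((8 * k).+1 * (2 * k)).
  elim: k => [|k IH]; first by rewrite big_ord0.
  by rewrite big_ord_recr /= IH -exprD; congr (x ^+ _); nia.
rewrite (big_ord_double _ (fun j => (x ^+ 4) ^+ j.+1)) -!big_split /=.
transitivity (x ^+ (8 * l).+1 ^+ (2 * l)); last by rewrite x8l1 expr1n.
rewrite -exprM -prod_pow; apply: eq_bigr => i _.
by rewrite !mulrN !mulNr opprK -!exprM -!exprD; congr (x ^+ _); lia.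
Qed.

Section AtRootOfUnity.
Variables (F : fieldType) (z : F) (n m : nat).
Hypotheses (z_prim : n.-primitive_root z) (n_odd : odd n).
Hypotheses (z4m1 : z ^+ (4 * m).+1 = 1) (m_lt_n : (m < n)%N).

Local Notation A := (prod_1subX (fun j => z * (z ^+ 4) ^+ j) m).
Local Notation B := (prod_1subX (fun j => z ^+ 2 * (z ^+ 8) ^+ j) m).

Let qpoch_z4_neq0 k : (k < n)%N -> qpoch (z ^+ 4) (z ^+ 4) k != 0.
Proof. exact/qpoch_prim_root_neq0/(coprime_pow2_odd 2). Qed.

Lemma coef_A k : (k < n)%N -> A`_k = qpoch z (z ^+ 4) k / qpoch (z ^+ 4) (z ^+ 4) k.
Proof.
move=> lt_kn; rewrite -(@coef_prod_1subX_geom _ z (z ^+ 4) m k) ?mulfK ?qpoch_z4_neq0 //.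
by rewrite -exprM -exprS.
Qed.

Lemma qpoch_z_z4_eq0 k : (m < k)%N -> qpoch z (z ^+ 4) k = 0.
Proof.
by move=> lt_mk; apply/eqP/prodf_eq0; exists (Ordinal lt_mk); rewrite //= -exprM -exprS z4m1 subrr.
Qed.

Lemma sum_qpoch_sq_coef :
  sum_qpoch_sq z n = (A * prod_XsubC (fun j => - (z ^+ 4) ^+ j.+1) m)`_m.
Proof.
rewrite /sum_qpoch_sq coefM.
rewrite (big_ord_widen n (fun j => A`_j * (prod_XsubC _ m)`_(m - j)) m_lt_n) [RHS]big_mkcond.
apply: eq_bigr => k _; case: ifP => [le_km | /negbT]; last first.
  by rewrite -ltnNge => lt_mk; rewrite qpoch_z_z4_eq0 // expr0n mul0r mul0r.
rewrite coef_prod_XsubC_recip ?leq_subr // subKn //.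
rewrite (@eq_prod_1subX _ (fun j => - (z ^+ 4) ^+ j.+1)
                         (fun j => - z ^+ 3 * (z * (z ^+ 4) ^+ j))); last first.
  by move=> j; rewrite exprS; ring.
rewrite [X in _ = _ * X]coef_prod_1subX_scale coef_A ?(leq_ltn_trans _ m_lt_n) //.
rewrite exprM -expr_div_n (_ : (- z) ^+ 3 = - z ^+ 3); ring.
Qed.

Lemma sum_qpoch_sq_parity :
  sum_qpoch_sq z n =
  (\prod_(j < m) (z ^+ 4) ^+ j.+1) * (if (2 %| m)%N then B`_(m %/ 2) else 0).
Proof.
rewrite sum_qpoch_sq_coef (@prod_XsubC_reflect _ _ (fun j => - (z * (z ^+ 4) ^+ j))).
  rewrite mulrCA coefCM prod_1subX_mulN coef_comp_poly_Xn //.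
  rewrite (@eq_prod_1subX _ _ (fun j => z ^+ 2 * (z ^+ 8) ^+ j)); last first.
    by move=> j; rewrite exprMn -!exprM; congr (_ * z ^+ _); lia.
  by congr (_ * _); apply: eq_bigr => j _; apply: opprK.
move=> j lt_jm; rewrite mulrNN mulrCA -!exprM -exprD -exprS -z4m1.
by congr (z ^+ _); lia.
Qed.

Lemma sum_qpoch_sq_odd : ~~ (2 %| m)%N -> sum_qpoch_sq z n = 0.
Proof. by move=> /negbTE m_odd; rewrite sum_qpoch_sq_parity m_odd mulr0. Qed.

Lemma sum_qpoch_sq_even l : m = (2 * l)%N ->
  sum_qpoch_sq z n =
  qpoch (z ^+ 5) (z ^+ 8) l * qpoch (z ^+ 7) (z ^+ 8) l / qpoch (z ^+ 4) (z ^+ 4) m.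
Proof.
move=> m2l; have z8l1 : z ^+ (8 * l).+1 = 1 by rewrite -z4m1 m2l mulnA.
have refl2 : qpoch (z ^+ 2) (z ^+ 8) l =
             \prod_(j < l) - (z ^+ 2 * (z ^+ 8) ^+ j) * qpoch (z ^+ 7) (z ^+ 8) l.
  by apply: qpoch_reflect => j lt_jl; rewrite -!exprM -!exprD -z8l1; congr (z ^+ _); lia.
have refl4 : qpoch (z ^+ 4) (z ^+ 8) l =
             \prod_(j < l) - (z ^+ 4 * (z ^+ 8) ^+ j) * qpoch (z ^+ 5) (z ^+ 8) l.
  by apply: qpoch_reflect => j lt_jl; rewrite -!exprM -!exprD -z8l1; congr (z ^+ _); lia.
have split4 : qpoch (z ^+ 4) (z ^+ 4) m = qpoch (z ^+ 4) (z ^+ 8) l * qpoch (z ^+ 8) (z ^+ 8) l.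
  by rewrite m2l qpoch_double -exprM -exprD.
have coef_B : B`_l * qpoch (z ^+ 8) (z ^+ 8) l = qpoch (z ^+ 2) (z ^+ 8) l.
  apply: coef_prod_1subX_geom; rewrite -exprM -exprD -(expr1n _ 2) -z4m1 -exprM.
  by congr (z ^+ _); lia.
have nz := qpoch_z4_neq0 m_lt_n; rewrite split4 refl4 !mulf_eq0 !negb_or in nz.
case/andP: nz => /andP[nzP4 nzq5] nzq8.
have m_even : (2 %| m)%N by rewrite m2l dvdn_mulr.
have half_m : (m %/ 2)%N = l by rewrite m2l mulKn.
rewrite sum_qpoch_sq_parity m_even half_m -(mulfK nzq8 B`_l) coef_B split4 refl2 refl4.
set c := \prod_(j < m) _; set P2 := \prod_(j < l) - (_ * _); set P4 := \prod_(j < l) - (_ * _).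
transitivity (c * P2 * P4 * (qpoch (z ^+ 7) (z ^+ 8) l / (P4 * qpoch (z ^+ 8) (z ^+ 8) l))).
  by field; rewrite nzP4 nzq8.
by rewrite /c m2l reflection_constants_cancel // mul1r; field; rewrite nzP4 nzq5 nzq8.
Qed.

Lemma sum_qpoch_sq_at_root : sum_qpoch_sq z n = closed_form z m.
Proof.
rewrite /closed_form; case: ifP => [m_even | /negbT m_odd]; last exact: sum_qpoch_sq_odd.
by apply: sum_qpoch_sq_even; rewrite mulnC divnK.
Qed.

End AtRootOfUnity.

Section ValueAt.
Variable z : algC.

Definition evalQ (p : {poly rat}) : algC := (map_poly ratr p).[z].

Definition value_at (x : ratfun) (v : algC) : Prop :=
  exists N D : {poly rat}, [/\ evalQ D != 0, x = N%:F / D%:F & v = evalQ N / evalQ D].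

Lemma tofrac_evalQ_neq0 D : evalQ D != 0 -> D%:F != 0.
Proof.
by move=> nzD; rewrite tofrac_eq0; apply: contraNneq nzD => ->; rewrite /evalQ rmorph0 horner0.
Qed.

Lemma value_at_poly p : value_at p%:F (evalQ p).
Proof. by exists p, 1; rewrite /evalQ !rmorph1 hornerC oner_eq0 !divr1. Qed.

Lemma value_at0 : value_at 0 0.
Proof. by have := value_at_poly 0; rewrite /evalQ !rmorph0 horner0. Qed.

Lemma value_at1 : value_at 1 1.
Proof. by have := value_at_poly 1; rewrite /evalQ !rmorph1 hornerC. Qed.

Lemma value_atX : value_at qF z.
Proof. by have := value_at_poly 'X; rewrite /evalQ map_polyX hornerX. Qed.

Lemma value_atD x v y w : value_at x v -> value_at y w -> value_at (x + y) (v + w).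
Proof.
move=> [N1 [D1 [nz1 -> ->]]] [N2 [D2 [nz2 -> ->]]].
exists (N1 * D2 + N2 * D1), (D1 * D2).
rewrite /evalQ !rmorphD !rmorphM hornerD !hornerM -!/(evalQ _) mulf_neq0 //.
by rewrite !addf_div ?tofrac_evalQ_neq0.
Qed.

Lemma value_atN x v : value_at x v -> value_at (- x) (- v).
Proof.
move=> [N [D [nzD -> ->]]]; exists (- N), D.
by rewrite /evalQ !rmorphN hornerN !mulNr.
Qed.

Lemma value_atM x v y w : value_at x v -> value_at y w -> value_at (x * y) (v * w).
Proof.
move=> [N1 [D1 [nz1 -> ->]]] [N2 [D2 [nz2 -> ->]]].
exists (N1 * N2), (D1 * D2).
rewrite /evalQ !(rmorphM, hornerM) -!/(evalQ _) mulf_neq0 //.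
by split=> //; rewrite mulf_div.
Qed.

Lemma value_atV x v : value_at x v -> v != 0 -> value_at x^-1 v^-1.
Proof.
move=> [N [D [nzD -> ->]]]; rewrite mulf_eq0 invr_eq0 (negbTE nzD) orbF => nzN.
by exists D, N; rewrite !invf_div.
Qed.

Lemma value_atXn x v k : value_at x v -> value_at (x ^+ k) (v ^+ k).
Proof. by move=> xv; elim: k => [|k IH]; rewrite ?exprS; [apply: value_at1 | apply: value_atM]. Qed.

Lemma value_at_qpoch x v y w k :
  value_at x v -> value_at y w -> value_at (qpoch x y k) (qpoch v w k).
Proof.
move=> xv yw; apply: (big_ind2 value_at value_at1 (@value_atM)) => j _.
exact: value_atD value_at1 (value_atN (value_atM xv (value_atXn _ yw))).
Qed.

End ValueAt.

Section MinimalPolynomial.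
Variables (z : algC) (P : {poly rat}).
Hypothesis P_neq0 : P != 0.
Hypothesis root_P : forall q, root (map_poly ratr q) z = (P %| q).

Lemma evalQ_eq0 q : (evalQ z q == 0) = (P %| q).
Proof. exact: root_P. Qed.

Lemma coprimep_evalQ D : evalQ z D != 0 -> coprimep D P.
Proof.
(* Write P = h * gcd(D, P): the gcd does not vanish at z, so h does, hence P | h. *)
move=> nzD; rewrite coprimep_def -dvdp1.
have /dvdpP[h defP] := dvdp_gcdr D P.
have nz_g : evalQ z (gcdp D P) != 0.
  by apply: contra nzD; rewrite !evalQ_eq0 => /dvdp_trans; apply; apply: dvdp_gcdl.
have P_h : P %| h.
  rewrite -evalQ_eq0; move: (dvdpp P); rewrite -evalQ_eq0 {1}defP.
  by rewrite /evalQ rmorphM hornerM -!/(evalQ _ _) mulf_eq0 (negbTE nz_g) orbF.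
have nz_h : h != 0 by apply: contraNneq P_neq0 => h0; rewrite defP h0 mul0r.
by rewrite -(dvdp_mul2l _ _ nz_h) mulr1 -defP.
Qed.

Lemma cong_mod_of_value_at x y v : value_at z x v -> value_at z y v -> cong_mod P x y.
Proof.
move=> xv yv; have [N [D [nzD xy0 v0]]] := value_atD xv (value_atN yv).
exists N, D; split => //; first exact: coprimep_evalQ.
by rewrite -evalQ_eq0; move/eqP: v0; rewrite subrr eq_sym mulf_eq0 invr_eq0 (negbTE nzD) orbF.
Qed.

End MinimalPolynomial.

Lemma root_PhiQ n (z : algC) :
  n.-primitive_root z -> forall q : {poly rat}, root (map_poly ratr q) z = (PhiQ n %| q).
Proof.
move=> z_prim q; have [p [p_min _] ->] := minCpolyP z; congr (_ %| q).
symmetry; apply: (@map_poly_inj rat algC ratr); rewrite -p_min (minCpoly_cyclotomic z_prim).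
rewrite -(Cintr_Cyclotomic z_prim) /PhiQ -map_poly_comp.
by apply: eq_map_poly => c /=; rewrite rmorph_int.
Qed.

Lemma PhiQ_neq0 n : PhiQ n != 0.
Proof. exact/monic_neq0/monic_map/Cyclotomic_monic. Qed.

Lemma value_at_sum_qpoch_sq n (z : algC) : n.-primitive_root z -> odd n ->
  value_at z (sum_qpoch_sq qF n) (sum_qpoch_sq z n).
Proof.
move=> z_prim n_odd; have zX := value_atX z; have z4 := value_atXn 4 zX.
apply: (big_ind2 (value_at z) (value_at0 z) (@value_atD z)) => k _.
apply: value_atM; last exact: value_atXn (value_atN zX).
apply: value_atM; first exact: value_atXn (value_at_qpoch _ zX z4).
apply: value_atV; first exact: value_atXn (value_at_qpoch _ z4 z4).
by rewrite expf_neq0 // (qpoch_prim_root_neq0 z_prim (coprime_pow2_odd 2 n_odd)).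
Qed.

Lemma value_at_closed_form n (z : algC) m : n.-primitive_root z -> odd n -> (m < n)%N ->
  value_at z (closed_form qF m) (closed_form z m).
Proof.
move=> z_prim n_odd lt_mn; have zX := value_atX z; have zXn k := value_atXn k zX.
rewrite /closed_form; case: ifP => _; last exact: value_at0.
apply: value_atM; first exact: value_atM (value_at_qpoch _ (zXn 5) (zXn 8))
                                         (value_at_qpoch _ (zXn 7) (zXn 8)).
apply: value_atV; first exact: value_at_qpoch _ (zXn 4) (zXn 4).
exact: qpoch_prim_root_neq0 z_prim (coprime_pow2_odd 2 n_odd) lt_mn.
Qed.

Definition neg_quarter_mod n := if (n %% 4 == 1)%N then (n %/ 4)%N else (3 * n %/ 4)%N.

Lemma neg_quarter_mod_lt n : (0 < n)%N -> (neg_quarter_mod n < n)%N.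
Proof. by rewrite /neg_quarter_mod; case: ifP; lia. Qed.

Lemma dvdn_neg_quarter_mod n : odd n -> (n %| (4 * neg_quarter_mod n).+1)%N.
Proof.
move=> n_odd; apply/dvdnP; exists (if (n %% 4 == 1)%N then 1 else 3)%N.
by rewrite /neg_quarter_mod; case: ifP; lia.
Qed.

Lemma closed_form_cases (F : fieldType) (q : F) n : odd n ->
  closed_form q (neg_quarter_mod n) =
    (if (n %% 8 == 1)%N then
       qpoch (q ^+ 5) (q ^+ 8) ((n - 1) %/ 8)%N * qpoch (q ^+ 7) (q ^+ 8) ((n - 1) %/ 8)%N
         / qpoch (q ^+ 4) (q ^+ 4) ((n - 1) %/ 4)%N
     else if (n %% 8 == 3)%N then
       qpoch (q ^+ 5) (q ^+ 8) ((3 * n - 1) %/ 8)%N * qpoch (q ^+ 7) (q ^+ 8) ((3 * n - 1) %/ 8)%N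
         / qpoch (q ^+ 4) (q ^+ 4) ((3 * n - 1) %/ 4)%N
     else 0).
Proof.
move=> n_odd; rewrite /closed_form /neg_quarter_mod.
have [n1 | [n3 | n57]] : (n %% 8 = 1 \/ n %% 8 = 3 \/ n %% 8 = 5 \/ n %% 8 = 7)%N by lia.
- have -> : (n %% 4 == 1)%N by lia.
  have -> : (2 %| n %/ 4)%N by lia.
  have -> : (n %/ 4 %/ 2 = (n - 1) %/ 8)%N by lia.
  have -> : (n %/ 4 = (n - 1) %/ 4)%N by lia.
  by rewrite n1.
- have -> : (n %% 4 == 1)%N = false by lia.
  have -> : (2 %| 3 * n %/ 4)%N by lia.
  have -> : (3 * n %/ 4 %/ 2 = (3 * n - 1) %/ 8)%N by lia.
  have -> : (3 * n %/ 4 = (3 * n - 1) %/ 4)%N by lia.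
  by rewrite n3.
have -> : (n %% 8 == 1)%N = false by lia.
have -> : (n %% 8 == 3)%N = false by lia.
by rewrite /= ifN //; case: ifP; lia.
Qed.

Theorem theorem3 (n : nat) : (0 < n)%N -> odd n ->
  cong_mod (PhiQ n)
    (\sum_(k < n)
       (qpoch qF (qF ^+ 4) k) ^+ 2 / (qpoch (qF ^+ 4) (qF ^+ 4) k) ^+ 2
       * (- qF) ^+ (3 * k)%N)
    (if (n %% 8 == 1)%N then
       qpoch (qF ^+ 5) (qF ^+ 8) ((n - 1) %/ 8)%N * qpoch (qF ^+ 7) (qF ^+ 8) ((n - 1) %/ 8)%N
         / qpoch (qF ^+ 4) (qF ^+ 4) ((n - 1) %/ 4)%N
     else if (n %% 8 == 3)%N then
       qpoch (qF ^+ 5) (qF ^+ 8) ((3 * n - 1) %/ 8)%N * qpoch (qF ^+ 7) (qF ^+ 8) ((3 * n - 1) %/ 8)%N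
         / qpoch (qF ^+ 4) (qF ^+ 4) ((3 * n - 1) %/ 4)%N
     else 0).
Proof.
move=> n_gt0 n_odd; rewrite -closed_form_cases //.
have [z z_prim] := C_prim_root_exists n_gt0.
set m := neg_quarter_mod n; have m_lt_n : (m < n)%N := neg_quarter_mod_lt n_gt0.
have z4m1 : z ^+ (4 * m).+1 = 1.
  by apply/eqP; rewrite -(prim_order_dvd z_prim) dvdn_neg_quarter_mod.
apply: (cong_mod_of_value_at (PhiQ_neq0 n) (root_PhiQ z_prim)).
  exact: value_at_sum_qpoch_sq z_prim n_odd.
rewrite (sum_qpoch_sq_at_root z_prim n_odd z4m1 m_lt_n).
exact: value_at_closed_form z_prim n_odd m_lt_n.
Qed.
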